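(* Let $a\in[0,\infty)$ and let $\theta:[0,1]\to[0,\infty]$ and $\vartheta:[0,\infty]\to[0,1]$ be continuous and decreasing functions such that (i) $\theta(x)=\frac{a}{2}$ if and only if $x=1$, and (ii) the function $O_{\theta,\vartheta}:[0,1]^2\to[0,1]$, $O_{\theta,\vartheta}(x,y)=\vartheta(\theta(x)+\theta(y))$, is an overlap function. Then $\vartheta(x)=1$ if and only if $x\in[0,a]$.
   Context: ''Decreasing'' means non-increasing and ''increasing'' means non-decreasing. Arithmetic in $[0,\infty]$ uses $c+\infty=\infty$; continuity on $[0,\infty]$ refers to the usual topology of the extended half-line. An overlap function is a map $O:[0,1]^2\to[0,1]$ that is (O1) commutative, (O2) $O(x,y)=0$ iff $xy=0$, (O3) $O(x,y)=1$ iff $xy=1$, (O4) increasing in each variable, (O5) continuous. *)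

From HB Require Import structures.
From mathcomp Require Import all_boot all_order all_algebra.
From mathcomp Require Import all_classical all_reals all_analysis.
Set Implicit Arguments. Unset Strict Implicit. Unset Printing Implicit Defensive.
Import Order.TTheory GRing.Theory Num.Theory.
Import numFieldNormedType.Exports.
Local Open Scope classical_set_scope.
Local Open Scope ring_scope.

Definition unit_itv (R : realType) : set R := `[0, 1]%classic.

(** An overlap function O : [0,1]^2 -> [0,1] (given as a function R -> R -> R,
    only its values on [0,1]^2 matter). *)
Definition is_overlap (R : realType) (O : R -> R -> R) : Prop :=
  (forall x y, unit_itv x -> unit_itv y -> 0 <= O x y <= 1) /\
  (forall x y, unit_itv x -> unit_itv y -> O x y = O y x) /\
  (forall x y, unit_itv x -> unit_itv y -> (O x y = 0 <-> x * y = 0)) /\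
  (forall x y, unit_itv x -> unit_itv y -> (O x y = 1 <-> x * y = 1)) /\
  (forall x y z, unit_itv x -> unit_itv y -> unit_itv z ->
     y <= z -> O x y <= O x z /\ O y x <= O z x) /\
  {within @unit_itv R `*` @unit_itv R, continuous (fun p : R * R => O p.1 p.2)}.

From HB Require Import structures.
From mathcomp Require Import all_boot all_order all_algebra.
From mathcomp Require Import all_classical all_reals all_analysis.
From mathcomp Require Import lra.
Set Implicit Arguments. Unset Strict Implicit. Unset Printing Implicit Defensive.
Import Order.TTheory GRing.Theory Num.Theory.
Import numFieldNormedType.Exports.
Local Open Scope classical_set_scope.
Local Open Scope ring_scope.

(* Since O(1,1) = 1 and θ(1) = a/2, we get ϑ(a) = 1, and ϑ, being decreasing
   and bounded by 1, equals 1 on [0,a].  Conversely, if ϑ(u) = 1 for some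
   u > a = 2 θ(1), continuity of θ at 1 yields x < 1 with θ(x) + θ(1) <= u,
   hence O(x,1) = ϑ(θ(x) + θ(1)) = 1, which (O3) forbids. *)

Lemma unit_itv0 (R : realType) : unit_itv (0 : R).
Proof. by rewrite /unit_itv /= in_itv /= lexx ler01. Qed.

Lemma unit_itv1 (R : realType) : unit_itv (1 : R).
Proof. by rewrite /unit_itv /= in_itv /= lexx ler01. Qed.

Lemma nonincreasing_eq1_le (R : realType) (f : \bar R -> R) (u v : \bar R) :
  (forall w, (0 <= w)%E -> f w <= 1) ->
  (forall w w', (0 <= w)%E -> (0 <= w')%E -> (w <= w')%E -> f w' <= f w) ->
  (0 <= u)%E -> (u <= v)%E -> f v = 1 -> f u = 1.
Proof.
move=> f_le1 f_decr u0 uv fv1; apply/le_anti; rewrite f_le1 //= -{1}fv1.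
by apply: f_decr => //; apply: le_trans uv.
Qed.

Lemma unit_itv_lt1_near1 (R : realType) (e : R) : 0 < e ->
  exists x : R, [/\ unit_itv x, x < 1 & ball (1 : R) e x].
Proof.
move=> e0; rewrite -ball_normE /unit_itv /=.
have [e_le2|e_gt2] := leP e 2.
- by exists (1 - e / 2); rewrite in_itv /= subKr ger0_norm; try split; lra.
- by exists 0; rewrite in_itv /= subr0 normr1; split; lra.
Qed.

Lemma continuous_unit_itv_lt_left1 (R : realType) (f : R -> \bar R) (r : R) :
  {within @unit_itv R, continuous f} -> (f 1%R < r%:E)%E ->
  exists x, [/\ unit_itv x, x < 1 & (f x < r%:E)%E].
Proof.
move=> fc f1r.
have /nbhs_ballP[e /= e0 fe] :=
  (subspace_continuousP _ _).1 fc 1 (unit_itv1 R) _ (open_ereal_lt' f1r).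
have [x [x01 x1 xe]] := unit_itv_lt1_near1 e0.
by exists x; split => //; apply: fe.
Qed.

Lemma continuous_unit_itv_addf1_le (R : realType) (f : R -> \bar R) (b : R)
    (u : \bar R) :
  {within @unit_itv R, continuous f} -> f 1%R = b%:E -> ((b + b)%:E < u)%E ->
  exists x, [/\ unit_itv x, x < 1 & (f x + f 1%R <= u)%E].
Proof.
move=> fc f1 bu; case: u bu => [r| |] //= bu; last first.
  by exists 0; split; [exact: unit_itv0 | exact: ltr01 | exact: leey].
rewrite lte_fin in bu.
have [|x [x01 x1 fx]] := @continuous_unit_itv_lt_left1 _ f (r - b) fc.
  by rewrite f1 lte_fin; lra.
exists x; split => //; rewrite f1.
apply: le_trans (_ : ((r - b)%:E + b%:E <= _)%E).
  by rewrite leeD2r // ltW.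
by rewrite -EFinD lee_fin; lra.
Qed.

Lemma overlap_eq1 (R : realType) (O : R -> R -> R) (x y : R) :
  is_overlap O -> unit_itv x -> unit_itv y -> (O x y = 1 <-> x * y = 1).
Proof. by move=> [_ [_ [_ [one_iff _]]]]; apply: one_iff. Qed.

Theorem proposition3p2 (R : realType) (a : R) (th : R -> \bar R) (vt : \bar R -> R) :
  0 <= a ->
  (* theta : [0,1] -> [0,oo], continuous and decreasing *)
  (forall x, unit_itv x -> (0 <= th x)%E) ->
  {within @unit_itv R, continuous th} ->
  (forall x y, unit_itv x -> unit_itv y -> x <= y -> (th y <= th x)%E) ->
  (* vartheta : [0,oo] -> [0,1], continuous and decreasing *)
  (forall u, (0 <= u)%E -> 0 <= vt u <= 1) ->
  {within [set u : \bar R | (0 <= u)%E], continuous vt} ->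
  (forall u v, (0 <= u)%E -> (0 <= v)%E -> (u <= v)%E -> vt v <= vt u) ->
  (* (i) *)
  (forall x, unit_itv x -> (th x = (a / 2)%:E <-> x = 1)) ->
  (* (ii) *)
  is_overlap (fun x y => vt (th x + th y)%E) ->
  forall u : \bar R, (0 <= u)%E -> (vt u = 1 <-> (u <= a%:E)%E).
Proof.
move=> _ th0 thc _ vt01 _ vtd thi O u u0.
have vt_le1 w : (0 <= w)%E -> vt w <= 1 by move/vt01/andP => [].
have th1 : th 1 = (a / 2)%:E by apply/thi; first exact: unit_itv1.
have halvesK : a / 2 + a / 2 = a by rewrite -splitr.
have vta : vt a%:E = 1.
  have := (overlap_eq1 O (unit_itv1 R) (unit_itv1 R)).2 (mulr1 1).
  by rewrite th1 -EFinD halvesK.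
split=> [vu1|ua]; last exact: nonincreasing_eq1_le ua vta.
rewrite leNgt; apply/negP => au.
rewrite -halvesK in au.
have [x [x01 /lt_eqF x1 thxu]] := continuous_unit_itv_addf1_le thc th1 au.
have thx0 : (0 <= th x + th 1%R)%E := adde_ge0 (th0 _ x01) (th0 _ (unit_itv1 R)).
have vtx1 : vt (th x + th 1%R)%E = 1 := nonincreasing_eq1_le vt_le1 vtd thx0 thxu vu1.
have := (overlap_eq1 O x01 (unit_itv1 R)).1 vtx1.
by rewrite mulr1 => /eqP; rewrite x1.
Qed.
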